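(* Let $\mathcal{W}$ be a finite set and $\mathcal{E}$ a closed convex subset of $\mathcal{P}_{\mathcal{W}}$. Let $\mathcal{X}$ and $\mathcal{Y}$ be finite sets with functions $f_{\mathcal{X}}:\mathcal{W}\to\mathcal{X}$ and $f_{\mathcal{Y}}:\mathcal{W}\to\mathcal{Y}$. For $y^N\in\mathcal{Y}^N$ define $$T(y^N):=\{x^N\in\mathcal{X}^N:\ \exists P\in\mathcal{E},\ P_{\mathcal{X}\times\mathcal{Y}}=\tilde P_{x^N,y^N}\}.$$ Then $$|T(y^N)|\le\max_{P\in\mathcal{E}:\ P_{\mathcal{Y}}=\tilde P_{y^N}}2^{N H(X|Y)_{P_{\mathcal{X}\times\mathcal{Y}}}}.$$
   Context: $\mathcal{P}_\Omega$ denotes the set of probability mass functions on a finite set $\Omega$. For $P\in\mathcal{P}_{\mathcal{W}}$, $P_{\mathcal{X}\times\mathcal{Y}}$ and $P_{\mathcal{Y}}$ are the distributions induced by $w\mapsto(f_{\mathcal{X}}(w),f_{\mathcal{Y}}(w))$ and $w\mapsto f_{\mathcal{Y}}(w)$, i.e. $P_\Gamma(g)=\sum_{w:f_\Gamma(w)=g}P(w)$. For sequences, $\tilde P_{y^N}(y)=\frac1N|\{i:y_i=y\}|$ and $\tilde P_{x^N,y^N}(x,y)=\frac1N|\{i:(x_i,y_i)=(x,y)\}|$ are types. $H(X|Y)_{P_{\mathcal{X}\times\mathcal{Y}}}$ is the conditional Shannon entropy (base 2) of $X$ given $Y$ under the joint distribution $P_{\mathcal{X}\times\mathcal{Y}}$.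 *)

From HB Require Import structures.
From mathcomp Require Import all_boot all_order all_algebra.
From mathcomp Require Import all_classical all_reals all_analysis.
Set Implicit Arguments. Unset Strict Implicit. Unset Printing Implicit Defensive.
Import Order.TTheory GRing.Theory Num.Theory.
Import numFieldNormedType.Exports.
Local Open Scope classical_set_scope.
Local Open Scope ring_scope.

Section Defs.
Variable R : realType.

Definition is_pmf (T : finType) (P : {ffun T -> R}) : Prop :=
  (forall t, 0 <= P t) /\ \sum_t P t = 1.

Definition convex_pmfset (T : finType) (E : {ffun T -> R} -> Prop) : Prop :=
  forall P Q t, E P -> E Q -> 0 <= t -> t <= 1 -> E (t *: P + (1 - t) *: Q).

(* closedness (in the Euclidean topology of R^T, T finite): sequential closedness,
   convergence in R^T being coordinatewise convergence *)
Definition closed_pmfset (T : finType) (E : {ffun T -> R} -> Prop) : Prop :=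
  forall (u : nat -> {ffun T -> R}) (P : {ffun T -> R}),
    (forall n, E (u n)) ->
    (forall t, (fun n => u n t : R) @ \oo --> (P t : R)) -> E P.

Definition pmf_push (W G : finType) (f : W -> G) (P : {ffun W -> R}) : {ffun G -> R} :=
  [ffun g => \sum_(w | f w == g) P w].

Definition emp_type1 (Y : finType) (N : nat) (y : N.-tuple Y) : {ffun Y -> R} :=
  [ffun b => #|[set i : 'I_N | tnth y i == b]|%:R / N%:R].

Definition emp_type2 (X Y : finType) (N : nat) (x : N.-tuple X) (y : N.-tuple Y)
  : {ffun X * Y -> R} :=
  [ffun g => #|[set i : 'I_N | (tnth x i, tnth y i) == g]|%:R / N%:R].

Definition log_2 (r : R) : R := ln r / ln 2.

Definition cond_entropy (X Y : finType) (Q : {ffun X * Y -> R}) : R :=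
  - \sum_(g : X * Y)
      (if Q g == 0 then 0
       else Q g * log_2 (Q g / \sum_(a : X) Q (a, g.2))).

Definition T_set (W X Y : finType) (E : {ffun W -> R} -> Prop)
  (fX : W -> X) (fY : W -> Y) (N : nat) (y : N.-tuple Y) : {set N.-tuple X} :=
  [set x : N.-tuple X | `[< exists P, E P /\
       pmf_push (fun w => (fX w, fY w)) P = emp_type2 x y >]].

End Defs.

(* For each x^N in T(y^N) pick P_x in E whose (X,Y)-marginal is the joint type of
   (x^N, y^N). By convexity their average P lies in E; its Y-marginal is the type of
   y^N and its (X,Y)-marginal Q is the average joint type, i.e. the pooled pair counts
   of T(y^N) normalised by N |T(y^N)|. With V(x|y) the conditional of Q,
   q(x^N) = prod_i V(x_i|y_i) is a sub-probability on X^N, and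
   -(1/|T|) sum_{x^N in T} ln q(x^N) = N H(X|Y)_Q ln 2. Gibbs' inequality against the
   uniform distribution on T(y^N) gives ln |T| <= N H(X|Y)_Q ln 2. *)

From HB Require Import structures.
From mathcomp Require Import all_boot all_order all_algebra.
From mathcomp Require Import all_classical all_reals all_analysis.
From mathcomp Require Import ring lra.
Set Implicit Arguments. Unset Strict Implicit. Unset Printing Implicit Defensive.
Import Order.TTheory GRing.Theory Num.Theory.
Import numFieldNormedType.Exports.
Local Open Scope ring_scope.

Lemma sum_tuple_prod (R : comPzSemiRingType) (X : finType) (N : nat)
    (F : 'I_N -> X -> R) :
  \sum_(x : N.-tuple X) \prod_(i < N) F i (tnth x i) =
  \prod_(i < N) \sum_(a : X) F i a.
Proof.
rewrite bigA_distr_bigA (reindex (fun f : {ffun 'I_N -> X} => [tuple f i | i < N])) /=.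
  by apply: eq_bigr => f _; apply: eq_bigr => i _; rewrite tnth_mktuple.
exists (fun x : N.-tuple X => [ffun i => tnth x i]) => [f _|x _].
  by apply/ffunP => i; rewrite ffunE tnth_mktuple.
by apply: eq_from_tnth => i; rewrite tnth_mktuple ffunE.
Qed.

Section Gibbs.
Variable R : realType.

Lemma ln_prod (I : Type) (r : seq I) (P : pred I) (F : I -> R) :
  (forall i, P i -> 0 < F i) ->
  ln (\prod_(i <- r | P i) F i) = \sum_(i <- r | P i) ln (F i).
Proof.
move=> F_gt0; symmetry.
apply: (proj2 (big_ind2 (fun s p => 0 < p /\ s = ln p) _ _ _)).
- by rewrite ln1.
- by move=> s1 p1 s2 p2 [p1_gt0 ->] [p2_gt0 ->]; rewrite mulr_gt0 // lnM.
- by move=> i /F_gt0.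
Qed.

Lemma gibbs_uniform (I : finType) (A : {pred I}) (q : I -> R) :
  (forall i, i \in A -> 0 < q i) -> \sum_(i in A) q i <= 1 ->
  #|A|%:R * ln (#|A|%:R : R) + \sum_(i in A) ln (q i) <= 0.
Proof.
move=> q_gt0 q_le1; set M := #|A|.
have M_gt0 i : i \in A -> (0 : R) < M%:R.
  by move=> Ai; rewrite ltr0n; apply/card_gt0P; exists i.
have -> : M%:R * ln (M%:R : R) = \sum_(i in A) ln (M%:R : R).
  by rewrite sumr_const mulr_natl.
rewrite -big_split /=.
apply: (@le_trans _ _ (\sum_(i in A) (M%:R * q i - 1))).
  apply: ler_sum => i Ai; have [M_pos q_pos] := (M_gt0 i Ai, q_gt0 i Ai).
  rewrite -lnM ?posrE // -[X in ln X](subrK 1) addrC le_ln1Dx //.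
  by rewrite ltrBrDl subrr mulr_gt0.
rewrite big_split /= -mulr_sumr sumrN sumr_const.
have := ler_wpM2l (ler0n _ M) q_le1; lra.
Qed.

End Gibbs.

Section ConditionalEntropy.
Variables (R : realType) (X Y : finType).

Definition cond_pmf (Q : X * Y -> R) (g : X * Y) : R :=
  Q g / \sum_(a : X) Q (a, g.2).

Lemma cond_entropyE (Q : {ffun X * Y -> R}) :
  cond_entropy Q * ln 2 = - \sum_g Q g * ln (cond_pmf Q g).
Proof.
have ln2_neq0 : ln (2 : R) != 0 by rewrite gt_eqF // ln_gt0 // ltr1n.
rewrite /cond_entropy mulNr mulr_suml; congr (- _); apply: eq_bigr => g _.
have [->|_] := eqVneq (Q g) 0; first by rewrite !mul0r.
by rewrite /log_2 -mulrA divfK.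
Qed.

Lemma cond_pmfZ (c : R) (Q : X * Y -> R) g : c != 0 ->
  cond_pmf (fun h => c * Q h) g = cond_pmf Q g.
Proof. by move=> c_neq0; rewrite /cond_pmf -mulr_sumr invfM mulrACA mulfV ?mul1r. Qed.

Variable Q : X * Y -> R.
Hypothesis Q_ge0 : forall g, 0 <= Q g.

Lemma cond_pmf_ge0 g : 0 <= cond_pmf Q g.
Proof. by rewrite divr_ge0 // sumr_ge0. Qed.

Lemma cond_pmf_gt0 g : 0 < Q g -> 0 < cond_pmf Q g.
Proof.
move=> Qg_gt0; rewrite divr_gt0 // (bigD1 g.1) //= -surjective_pairing.
by rewrite ltr_pwDl // sumr_ge0.
Qed.

Lemma sum_cond_pmf_le1 b : \sum_(a : X) cond_pmf Q (a, b) <= 1.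
Proof.
rewrite /cond_pmf /= -mulr_suml.
have [->|sum_neq0] := eqVneq (\sum_(a : X) Q (a, b)) 0; first by rewrite mul0r.
by rewrite divff.
Qed.

Lemma sum_prod_cond_pmf_le1 (N : nat) (y : N.-tuple Y) :
  \sum_(x : N.-tuple X) \prod_(i < N) cond_pmf Q (tnth x i, tnth y i) <= 1.
Proof.
rewrite (sum_tuple_prod (fun i a => cond_pmf Q (a, tnth y i))).
apply: prodr_ile1 => i _; rewrite sumr_ge0 ?sum_cond_pmf_le1 // => a _.
exact: cond_pmf_ge0.
Qed.

End ConditionalEntropy.

(* [emp_type1] and [emp_type2] are cardinals of classical sets: they are built with
   [set _ | _] in [classical_set_scope]. *)
Lemma card_classical_set (I : finType) (p : pred I) :
  #|([set i | p i])%classic| = #|[set i | p i]|.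
Proof. by apply: eq_card => i; rewrite !inE; apply/idP/idP; rewrite in_setE. Qed.

Section JointTypes.
Variables (R : realType) (X Y : finType) (N : nat) (y : N.-tuple Y).

Definition joint_count (x : N.-tuple X) (g : X * Y) : nat :=
  #|[set i : 'I_N | (tnth x i, tnth y i) == g]|.

Lemma emp_type2E x g : emp_type2 R x y g = (joint_count x g)%:R / N%:R.
Proof. by rewrite ffunE card_classical_set. Qed.

Lemma emp_type1E b : emp_type1 R y b = #|[set i | tnth y i == b]|%:R / N%:R.
Proof. by rewrite ffunE card_classical_set. Qed.

Lemma joint_count_gt0 x i : (0 < joint_count x (tnth x i, tnth y i))%N.
Proof. by apply/card_gt0P; exists i; rewrite inE. Qed.

Lemma sum_joint_count x (f : X * Y -> R) :
  \sum_g (joint_count x g)%:R * f g = \sum_(i < N) f (tnth x i, tnth y i).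
Proof.
rewrite (partition_big (fun i : 'I_N => (tnth x i, tnth y i)) predT) //=.
apply: eq_bigr => g _; rewrite /joint_count -sum1_card natr_sum mulr_suml.
by apply: eq_big => i; rewrite inE // => /eqP ->; rewrite mul1r.
Qed.

Variable T : {set N.-tuple X}.

Definition pooled_count (g : X * Y) : nat := \sum_(x in T) joint_count x g.

Definition mean_type : {ffun X * Y -> R} :=
  #|T|%:R^-1 *: \sum_(x in T) emp_type2 R x y.

Lemma mean_typeE g : mean_type g = (#|T| * N)%:R^-1 * (pooled_count g)%:R.
Proof.
rewrite ffunE sum_ffunE -[_ *: _]/(_ * _) natrM invfM -mulrA; congr (_ * _).
by rewrite natr_sum mulr_sumr; apply: eq_bigr => x _; rewrite emp_type2E mulrC.
Qed.

Lemma sum_pooled_count (f : X * Y -> R) :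
  \sum_g (pooled_count g)%:R * f g = \sum_(x in T) \sum_(i < N) f (tnth x i, tnth y i).
Proof.
under eq_bigr do rewrite natr_sum mulr_suml.
by rewrite exchange_big; apply: eq_bigr => x _; rewrite sum_joint_count.
Qed.

Definition pooled_cond : X * Y -> R := cond_pmf (fun g => (pooled_count g)%:R).

Lemma pooled_cond_gt0 x i : x \in T -> 0 < pooled_cond (tnth x i, tnth y i).
Proof.
move=> xT; apply: cond_pmf_gt0 => [g|]; first exact: ler0n.
by rewrite ltr0n /pooled_count (bigD1 x) //= ltn_addr ?joint_count_gt0.
Qed.

Lemma sum_prod_pooled_cond_le1 :
  \sum_(x in T) \prod_(i < N) pooled_cond (tnth x i, tnth y i) <= 1.
Proof.
apply: le_trans (sum_prod_cond_pmf_le1 (fun g => ler0n _ (pooled_count g)) y).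
rewrite [X in _ <= X](bigID (mem T)) /= lerDl.
by apply: sumr_ge0 => x _; apply: prodr_ge0 => i _; apply: cond_pmf_ge0.
Qed.

Lemma cond_entropy_mean_type : (0 < #|T|)%N -> (0 < N)%N ->
  N%:R * cond_entropy mean_type * ln 2 =
  - (#|T|%:R^-1 * \sum_(x in T) \sum_(i < N) ln (pooled_cond (tnth x i, tnth y i))).
Proof.
move=> T_gt0 N_gt0.
have M_neq0 : (#|T|%:R : R) != 0 by rewrite pnatr_eq0 -lt0n.
have N_neq0 : (N%:R : R) != 0 by rewrite pnatr_eq0 -lt0n.
have c_neq0 : ((#|T| * N)%:R : R)^-1 != 0 by rewrite invr_eq0 natrM mulf_neq0.
rewrite -mulrA cond_entropyE (boolp.funext mean_typeE) /pooled_cond.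
under eq_bigr do rewrite (cond_pmfZ (fun h => (pooled_count h)%:R)) // -mulrA.
by rewrite -mulr_sumr sum_pooled_count natrM; field; apply/andP.
Qed.

Lemma card_le_exp_cond_entropy :
  #|T|%:R <= (2 : R) `^ (N%:R * cond_entropy mean_type).
Proof.
have [T0|T_gt0] := posnP #|T|; first by rewrite T0 powR_ge0.
have [N0|N_gt0] := posnP N.
  have -> : (N%:R : R) = 0 by rewrite N0.
  by rewrite mul0r powRr0 lern1 (leq_trans (max_card (mem T))) // card_tuple N0.
have ln_prod_pooled_cond x : x \in T ->
    ln (\prod_(i < N) pooled_cond (tnth x i, tnth y i)) =
    \sum_(i < N) ln (pooled_cond (tnth x i, tnth y i)).
  by move=> xT; rewrite ln_prod // => i _; apply: pooled_cond_gt0.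
have prod_pooled_cond_gt0 x : x \in T ->
    0 < \prod_(i < N) pooled_cond (tnth x i, tnth y i).
  by move=> xT; apply: prodr_gt0 => i _; apply: pooled_cond_gt0.
have := gibbs_uniform prod_pooled_cond_gt0 sum_prod_pooled_cond_le1.
rewrite (eq_bigr _ ln_prod_pooled_cond) => gibbs.
have M_gt0 : (0 : R) < #|T|%:R by rewrite ltr0n.
rewrite /powR pnatr_eq0 /= -(lnK M_gt0) ler_expR cond_entropy_mean_type //.
rewrite -(ler_pM2l M_gt0) mulrN mulrA mulfV ?mul1r ?gt_eqF //.
lra.
Qed.

End JointTypes.

Section PushForward.
Variable R : realType.

Lemma pmf_pushZ (W G : finType) (f : W -> G) (c : R) (P : {ffun W -> R}) :
  pmf_push f (c *: P) = c *: pmf_push f P.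
Proof.
apply/ffunP => g; rewrite !ffunE [RHS]mulr_sumr.
by apply: eq_bigr => w _; rewrite ffunE.
Qed.

Lemma pmf_push_sum (W G I : finType) (f : W -> G) (A : {pred I})
    (F : I -> {ffun W -> R}) :
  pmf_push f (\sum_(i in A) F i) = \sum_(i in A) pmf_push f (F i).
Proof.
apply/ffunP => g; rewrite ffunE !sum_ffunE.
under eq_bigr do rewrite sum_ffunE.
by rewrite exchange_big; apply: eq_bigr => i _; rewrite ffunE.
Qed.

Lemma pmf_push_comp (W G H : finType) (f : W -> G) (h : G -> H) (P : {ffun W -> R}) :
  pmf_push h (pmf_push f P) = pmf_push (h \o f) P.
Proof.
apply/ffunP => z; rewrite !ffunE (partition_big f (fun g => h g == z)) //=.
apply: eq_bigr => g /eqP hg; rewrite ffunE; apply: eq_bigl => w.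
by rewrite andbC; case: (f w =P g) => //= ->; rewrite hg eqxx.
Qed.

Lemma pmf_push_snd_emp_type2 (X Y : finType) (N : nat) (x : N.-tuple X) (y : N.-tuple Y) :
  pmf_push snd (emp_type2 R x y) = emp_type1 R y.
Proof.
apply/ffunP => b; rewrite ffunE emp_type1E.
under eq_bigr do rewrite emp_type2E.
rewrite -mulr_suml -natr_sum; congr (_%:R / _).
rewrite -sum1_card (partition_big (fun i => (tnth x i, tnth y i)) (fun g => g.2 == b));
  last by move=> i; rewrite inE.
apply: eq_bigr => g /eqP gb; rewrite /joint_count -sum1_card; apply: eq_bigl => i.
by rewrite !inE andbC; case: eqP => //= eq_g; rewrite -gb -eq_g eqxx.
Qed.

End PushForward.

Section Convexity.
Variables (R : realType) (W : finType) (E : {ffun W -> R} -> Prop).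
Hypothesis E_convex : convex_pmfset E.

Lemma convex_mean (I : eqType) (F : I -> {ffun W -> R}) (s : seq I) :
  s != [::] -> {in s, forall i, E (F i)} ->
  E ((size s)%:R^-1 *: \sum_(i <- s) F i).
Proof.
elim: s => [//|a s IHs] _ EF.
have EFa : E (F a) by apply: EF; rewrite mem_head.
case: s IHs EF => [|b s] IHs EF; first by rewrite big_seq1 invr1 scale1r.
set n := size (b :: s).
have Emean : E (n%:R^-1 *: \sum_(i <- b :: s) F i).
  by apply: IHs => // i si; apply: EF; rewrite in_cons si orbT.
have t_ge0 : (0 : R) <= n.+1%:R^-1 by rewrite invr_ge0.
have t_le1 : (n.+1%:R^-1 : R) <= 1 by rewrite invf_le1 ?ler1n ?ltr0n.
have n_neq0 : (n%:R : R) != 0 by rewrite pnatr_eq0.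
have n1_neq0 : (n%:R + 1 : R) != 0 by rewrite natr1 pnatr_eq0.
have := E_convex EFa Emean t_ge0 t_le1.
have -> : size [:: a, b & s] = n.+1 by [].
congr E; rewrite [in RHS]big_cons scalerDr scalerA; congr (_ + _ *: _).
by rewrite -natr1; field; apply/andP.
Qed.

Lemma convex_mean_finset (I : finType) (F : I -> {ffun W -> R}) (A : {set I}) :
  (0 < #|A|)%N -> {in A, forall i, E (F i)} ->
  E (#|A|%:R^-1 *: \sum_(i in A) F i).
Proof.
move=> A_gt0 EF; rewrite cardE -big_enum.
apply: convex_mean => [|i]; first by rewrite -size_eq0 -cardE -lt0n.
by rewrite mem_enum; apply: EF.
Qed.

End Convexity.

Theorem lemma1 (R : realType) (W X Y : finType) (E : {ffun W -> R} -> Prop)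
  (hpmf : forall P, E P -> is_pmf P) (hconv : convex_pmfset E) (hclosed : closed_pmfset E)
  (fX : W -> X) (fY : W -> Y) (N : nat) (y : N.-tuple Y) :
  #|T_set E fX fY y| = 0%N \/
  exists P, [/\ E P, pmf_push fY P = emp_type1 R y &
    (#|T_set E fX fY y|%:R <= (2 : R) `^ (N%:R * cond_entropy (pmf_push (fun w => (fX w, fY w)) P)))].
Proof.
set T := T_set E fX fY y.
have [T0|T_gt0] := posnP #|T|; [by left | right].
have [P_ P_spec] : {P_ : N.-tuple X -> {ffun W -> R} & forall x, x \in T ->
    E (P_ x) /\ pmf_push (fun w => (fX w, fY w)) (P_ x) = emp_type2 R x y}.
  apply: (@boolp.choice _ _ (fun x P => x \in T ->
    E P /\ pmf_push (fun w => (fX w, fY w)) P = emp_type2 R x y)) => x.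
  have [xT|_] := boolP (x \in T); last by exists 0.
  by move: xT; rewrite inE => /asboolP[P]; exists P.
pose P := #|T|%:R^-1 *: \sum_(x in T) P_ x.
have joint_P : pmf_push (fun w => (fX w, fY w)) P = mean_type R y T.
  rewrite pmf_pushZ pmf_push_sum; congr (_ *: _).
  by apply: eq_bigr => x /P_spec[].
exists P; split.
- by apply: convex_mean_finset => // x /P_spec[].
- rewrite -[fY]/(snd \o (fun w => (fX w, fY w))) -pmf_push_comp joint_P.
  rewrite /mean_type pmf_pushZ pmf_push_sum.
  under eq_bigr do rewrite pmf_push_snd_emp_type2.
  rewrite sumr_const -[emp_type1 R y *+ _]scaler_nat scalerA mulVf ?scale1r //.
  by rewrite pnatr_eq0 -lt0n.
- by rewrite joint_P; apply: card_le_exp_cond_entropy.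
Qed.
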